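(* Let $\mathcal{F}_1,\dots,\mathcal{F}_k$ be finite nonempty families of convex sets in $\mathbb{R}^d$ with $n_i=|\mathcal{F}_i|$, let $b\in\mathbb{R}^d$, let $\alpha\in(0,1]$ and $\beta=1-(1-\alpha)^{1/k}$. Assume that for at least an $\alpha$ fraction of the $\prod_{i=1}^k n_i$ transversals $\mathcal{T}$ of $\mathcal{F}_1,\dots,\mathcal{F}_k$, the set $K(\mathcal{T})$ has a point in $B(b,1)$. Then there exist $q\in\mathbb{R}^d$ and $i\in[k]$ such that at least $\beta n_i$ elements of $\mathcal{F}_i$ intersect the ball $B(q,1/\sqrt k)$.
   Context: A transversal of $\mathcal{F}_1,\dots,\mathcal{F}_k$ is $\mathcal{T}=(K_1,\dots,K_k)$ with $K_i\in\mathcal{F}_i$ for all $i$, and $K(\mathcal{T})=\bigcap_{i=1}^kK_i$. $B(p,\rho)$ is the closed Euclidean ball of centre $p$ and radius $\rho$. *)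

From HB Require Import structures.
From mathcomp Require Import all_boot all_order all_algebra.
From mathcomp Require Import all_classical all_reals exp.
Set Implicit Arguments. Unset Strict Implicit. Unset Printing Implicit Defensive.
Import Order.TTheory GRing.Theory Num.Theory.
Local Open Scope ring_scope.
Local Open Scope classical_set_scope.

Definition eucl_norm (R : realType) (d : nat) (v : 'rV[R]_d) : R :=
  Num.sqrt (\sum_(i < d) v ord0 i ^+ 2).

Definition eball (R : realType) (d : nat) (p : 'rV[R]_d) (rho : R) : set 'rV[R]_d :=
  [set x | eucl_norm (x - p) <= rho].

Definition convex_set (R : realType) (d : nat) (A : set 'rV[R]_d) : Prop :=
  forall x y, A x -> A y -> forall t : R, 0 <= t -> t <= 1 ->
    A (t *: x + (1 - t) *: y).

(* A transversal of families F_1..F_k (F_i indexed by 'I_(n i)) is a choice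
   function picking an index in each family. *)
Definition transv (k : nat) (n : 'I_k -> nat) := {dffun forall i : 'I_k, 'I_(n i)}.

Definition KT (R : realType) (d k : nat) (n : 'I_k -> nat)
  (F : forall i : 'I_k, 'I_(n i) -> set 'rV[R]_d) (t : transv n) : set 'rV[R]_d :=
  [set x | forall i, F i (t i) x].

(* Put gamma = (1 - alpha)^(1/k), so that alpha = 1 - gamma^k, and suppose that for every
   centre c and every i fewer than (1 - gamma) n_i members of F_i meet B(c, 1/sqrt k).
   Fix in each good transversal T a point w(T) of K(T) inside B(b, 1).  By induction on m
   one finds a choice p of members of the first m families and a centre c such that a
   (1 - gamma^(k-m))-fraction of the transversals extending p are good with
   |w(T) - c|^2 <= 1 - m/k.  For the step, averaging over the members K of the next family
   yields one that misses B(c, 1/sqrt k) yet still carries a (1 - gamma^(k-m-1))-fraction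
   of the extensions.  The point z of the convex hull of their witnesses nearest to c lies
   in K, so |z - c|^2 > 1/k, and for every witness x the angle at z of the triangle c z x
   is obtuse, so |x - z|^2 <= |x - c|^2 - 1/k: recentring at z restores the invariant for m + 1.
   For m = k - 1 the surviving transversals are determined by their last member, which
   then meets B(c, 1/sqrt k); so there are fewer than (1 - gamma) n_k of them, a
   contradiction. *)

From mathcomp Require Import all_boot all_order all_algebra.
From mathcomp Require Import all_classical all_reals exp topology normedtype derive.
From mathcomp Require Import ring lra zify.
Import Order.TTheory GRing.Theory Num.Theory.
Import numFieldTopology.Exports numFieldNormedType.Exports.
Local Open Scope ring_scope.
Local Open Scope classical_set_scope.

Section Euclid.
Context {R : realType} {d : nat}.
Implicit Types (u v c : 'rV[R]_d) (a r : R).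

Definition sqnorm v : R := \sum_(i < d) v ord0 i ^+ 2.

Definition dotp u v : R := \sum_(i < d) u ord0 i * v ord0 i.

Lemma sqnorm_ge0 v : 0 <= sqnorm v.
Proof. by apply: sumr_ge0 => i _; exact: sqr_ge0. Qed.

Lemma sqnormD u v : sqnorm (u + v) = sqnorm u + sqnorm v + 2 * dotp u v.
Proof.
rewrite /sqnorm /dotp mulr_sumr -!big_split /=.
by apply: eq_bigr => i _; rewrite !mxE; ring.
Qed.

Lemma sqnormZ a v : sqnorm (a *: v) = a ^+ 2 * sqnorm v.
Proof. by rewrite /sqnorm mulr_sumr; apply: eq_bigr => i _; rewrite !mxE; ring. Qed.

Lemma dotpZr a u v : dotp u (a *: v) = a * dotp u v.
Proof. by rewrite /dotp mulr_sumr; apply: eq_bigr => i _; rewrite !mxE; ring. Qed.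

Lemma eball_sqnorm c r v : 0 <= r -> eball c r v <-> sqnorm (v - c) <= r ^+ 2.
Proof.
move=> r_ge0; rewrite /eball /= /eucl_norm -/(sqnorm _).
by rewrite -[X in _ <= X](ger0_norm r_ge0) -sqrtr_sqr ler_sqrt ?sqr_ge0.
Qed.

Lemma sqnorm_continuous : continuous (sqnorm : 'rV[R]_d -> R).
Proof.
apply: continuous_big; first exact: add_continuous.
by move=> i _ v; apply: continuousM; exact: coord_continuous.
Qed.

Definition simplex (m : nat) : set 'rV[R]_m :=
  [set l | (forall j, 0 <= l ord0 j) /\ \sum_j l ord0 j = 1].

Definition convex_comb {m} (x : 'I_m -> 'rV[R]_d) (l : 'rV[R]_m) : 'rV[R]_d :=
  \sum_j l ord0 j *: x j.

Definition hull {m} (x : 'I_m -> 'rV[R]_d) : set 'rV[R]_d := convex_comb x @` simplex m.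

Lemma simplex_compact m : compact (simplex m).
Proof.
pose cube : set 'rV[R]_m := [set l | forall j, `[0, 1] (l ord0 j)].
have -> : simplex m = cube `&` [set l | \sum_j l ord0 j = 1].
  apply/seteqP; split => [l [l_ge0 l_sum1]|l [l01 l_sum1]]; last first.
    by split => // j; have := l01 j; rewrite /= in_itv /= => /andP[].
  split=> // j; rewrite /= in_itv /= l_ge0 -l_sum1 /=.
  by rewrite (bigD1 j) //= lerDl sumr_ge0.
apply: compact_closedI.
  by apply: (@rV_compact _ _ (fun=> `[(0 : R), 1]%classic)) => j; exact: segment_compact.
have sum_cont : continuous (fun l : 'rV[R]_m => \sum_j l ord0 j).
  by apply: continuous_big; [exact: add_continuous | move=> j _; exact: coord_continuous].
exact: (continuous_closedP _).1 sum_cont _ (@closed_eq R 1).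
Qed.

Lemma convex_comb_continuous {m} (x : 'I_m -> 'rV[R]_d) : continuous (convex_comb x).
Proof.
apply: continuous_big; first exact: add_continuous.
by move=> j _ l; apply: continuousZr_tmp; exact: coord_continuous.
Qed.

Lemma hull_compact {m} (x : 'I_m -> 'rV[R]_d) : compact (hull x).
Proof.
apply: continuous_compact (simplex_compact m).
exact/continuous_subspaceT/convex_comb_continuous.
Qed.

Lemma hull_vertex {m} (x : 'I_m -> 'rV[R]_d) j : hull x (x j).
Proof.
exists (\row_i (i == j)%:R).
  split=> [i|]; first by rewrite mxE ler0n.
  under eq_bigr do rewrite mxE.
  by rewrite (bigD1 j) //= eqxx big1 ?addr0 // => i /negbTE ->.
rewrite /convex_comb (bigD1 j) //= mxE eqxx scale1r big1 ?addr0 // => i /negbTE ij.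
by rewrite mxE ij scale0r.
Qed.

Lemma hull_convex {m} (x : 'I_m -> 'rV[R]_d) : convex_set (hull x).
Proof.
move=> _ _ [l [l_ge0 l_sum1] <-] [l' [l'_ge0 l'_sum1] <-] t t_ge0 t_le1.
exists (t *: l + (1 - t) *: l').
  split=> [j|]; first by rewrite !mxE addr_ge0 ?mulr_ge0 ?subr_ge0.
  under eq_bigr do rewrite !mxE.
  by rewrite big_split -!mulr_sumr /= l_sum1 l'_sum1; ring.
rewrite /convex_comb !scaler_sumr -big_split /=; apply: eq_bigr => j _.
by rewrite !mxE !scalerA scalerDl.
Qed.

Lemma hull_sub_convex {K : set 'rV[R]_d} {m} (x : 'I_m -> 'rV[R]_d) :
  convex_set K -> (forall j, K (x j)) -> hull x `<=` K.
Proof.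
move=> K_convex; elim: m x => [|m IH] x Kx _ [l [l_ge0 l_sum1] <-].
  by move: l_sum1; rewrite big_ord0 => /esym/eqP; rewrite oner_eq0.
rewrite /convex_comb big_ord_recl; rewrite big_ord_recl in l_sum1.
set s := \sum_(i < m) _ in l_sum1.
have s_ge0 : 0 <= s by exact: sumr_ge0.
have [s0|s_neq0] := eqVneq s 0.
  have tail0 i : l ord0 (lift ord0 i) = 0 by exact: (psumr_eq0P _ s0).
  rewrite big1 => [|i _]; last by rewrite tail0 scale0r.
  by move: l_sum1; rewrite s0 addr0 => ->; rewrite scale1r addr0.
have s_gt0 : 0 < s by rewrite lt_neqAle eq_sym s_neq0.
pose l' := \row_i (l ord0 (lift ord0 i) / s).
have head_compl : 1 - l ord0 ord0 = s by rewrite -l_sum1 addrC addKr.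
have -> : \sum_(i < m) l ord0 (lift ord0 i) *: x (lift ord0 i) =
          (1 - l ord0 ord0) *: convex_comb (fun i => x (lift ord0 i)) l'.
  rewrite head_compl scaler_sumr; apply: eq_bigr => i _.
  by rewrite mxE scalerA [s * _]mulrC divfK.
apply: K_convex => //; last by rewrite -l_sum1 lerDl.
apply: (IH _ (fun i => Kx _)); exists l' => //; split=> [i|]; first by rewrite mxE divr_ge0.
under eq_bigr do rewrite mxE.
by rewrite -mulr_suml divff.
Qed.

Lemma nearest_point_obtuse {H : set 'rV[R]_d} {c z y} :
  convex_set H -> H z -> H y ->
  (forall u, H u -> sqnorm (z - c) <= sqnorm (u - c)) ->
  0 <= dotp (z - c) (y - z).
Proof.
move=> H_convex Hz Hy z_min; rewrite leNgt; apply/negP => a_lt0.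
set a := dotp _ _ in a_lt0; set L := sqnorm (y - z).
have L_ge0 : 0 <= L by exact: sqnorm_ge0.
(* otherwise the point at parameter t = -a / (L - a) on [z, y] is closer to c *)
pose t := - a / (L - a).
have La_gt0 : 0 < L - a by lra.
have tE : t * (L - a) = - a by rewrite divfK ?gt_eqF.
have t_gt0 : 0 < t by rewrite divr_gt0 ?oppr_gt0.
have t_le1 : t <= 1 by rewrite ler_pdivrMr // mul1r; lra.
have := z_min _ (H_convex _ _ Hy Hz t (ltW t_gt0) t_le1).
have -> : t *: y + (1 - t) *: z - c = (z - c) + t *: (y - z).
  by apply/matrixP => i j; rewrite !mxE; ring.
rewrite [sqnorm (_ + t *: _)]sqnormD sqnormZ dotpZr -/a -/L; nra.
Qed.

Lemma hull_recentre (K : set 'rV[R]_d) {m} (x : 'I_m -> 'rV[R]_d) c {r2 s2} :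
  (0 < m)%N -> convex_set K -> (forall j, K (x j)) ->
  (forall y, K y -> r2 < sqnorm (y - c)) ->
  (forall j, sqnorm (x j - c) <= s2) ->
  exists c', forall j, sqnorm (x j - c') <= s2 - r2.
Proof.
move=> m_gt0 K_convex Kx K_far x_near.
have hull0 : hull x !=set0 by exists (x (Ordinal m_gt0)); exact: hull_vertex.
have dist_cont : continuous (fun u => sqnorm (u - c)).
  move=> u; apply: (continuous_comp (f := fun u => u - c)) (sqnorm_continuous _).
  by apply: continuousB; [exact: cvg_id | exact: cst_continuous].
have [z] := compact_EVT_min hull0 (hull_compact x) (continuous_subspaceT dist_cont).
rewrite inE => Hz z_min; exists z => j.
have z_far : r2 < sqnorm (z - c) by apply/K_far/(hull_sub_convex x K_convex Kx).
have obtuse := nearest_point_obtuse (hull_convex x) Hz (hull_vertex x j)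
  (fun u Hu => z_min u (mem_set Hu)).
have := x_near j.
rewrite (_ : x j - c = (z - c) + (x j - z)); last by rewrite [RHS]addrC addrA subrK.
rewrite sqnormD; lra.
Qed.

Lemma convex_recentre {I : finType} {A : {pred I}} (x : I -> 'rV[R]_d)
    {K : set 'rV[R]_d} {c r2 s2} :
  (0 < #|A|)%N -> convex_set K -> {in A, forall j, K (x j)} ->
  (forall y, K y -> r2 < sqnorm (y - c)) ->
  {in A, forall j, sqnorm (x j - c) <= s2} ->
  exists c', {in A, forall j, sqnorm (x j - c') <= s2 - r2}.
Proof.
move=> A_gt0 K_convex Kx K_far x_near.
have [c' near_c'] := hull_recentre K (x \o enum_val) c A_gt0 K_convex
  (fun i => Kx _ (enum_valP i)) K_far (fun i => x_near _ (enum_valP i)).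
by exists c' => j Aj; have := near_c' (enum_rank_in Aj j); rewrite /= enum_rankK_in.
Qed.

End Euclid.

Lemma heavy_fibre {R : realFieldType} {I : finType} {S : {pred I}} {f : I -> R}
    {P g gam : R} :
  0 <= gam -> 0 <= g -> 0 <= P -> (forall K, f K <= P) ->
  #|S|%:R < (1 - gam) * #|I|%:R ->
  (1 - gam * g) * (#|I|%:R * P) <= \sum_K f K ->
  exists2 K, K \notin S & (1 - g) * P <= f K.
Proof.
move=> gam_ge0 g_ge0 P_ge0 f_le S_small f_large.
have [//|no_heavy] := pselect (exists2 K, K \notin S & (1 - g) * P <= f K).
have light K : K \notin S -> f K < (1 - g) * P.
  by move=> KS; rewrite ltNge; apply/negP => fK; apply: no_heavy; exists K.
have cardSC : #|[predC S]|%:R = #|I|%:R - #|S|%:R :> R.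
  by rewrite -(cardC S) natrD addrC addKr.
have S_lt : (#|S| < #|I|)%N.
  by rewrite -(ltr_nat R); apply: (lt_le_trans S_small); rewrite ler_piMl ?ler0n //; lra.
have /card_gt0P[K0 K0S] : (0 < #|[predC S]|)%N by move: S_lt; rewrite -(cardC S); lia.
have sum_in : \sum_(K in S) f K <= #|S|%:R * P.
  by rewrite mulr_natl -sumr_const; apply: ler_sum => K _; exact: f_le.
have sum_out : \sum_(K | K \notin S) f K < #|[predC S]|%:R * ((1 - g) * P).
  rewrite mulr_natl -sumr_const; apply: ltr_sum => [|K]; last exact: light.
  by apply/hasP; exists K0; rewrite ?mem_index_enum.
have S_gP : #|S|%:R * (g * P) <= (1 - gam) * #|I|%:R * (g * P).
  by apply: ler_wpM2r; [exact: mulr_ge0 | exact: ltW].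
move: f_large; rewrite (bigID (mem S)) /=; rewrite cardSC in sum_out; nra.
Qed.

Definition tail_prod {k} (n : 'I_k -> nat) (m : nat) : nat := \prod_(j < k | (m <= j)%N) n j.

Section Transversals.
Context {k : nat} {n : 'I_k -> nat}.

Definition agree (p : transv n) (m : nat) : pred (transv n) :=
  [pred T : transv n | [forall j : 'I_k, (j < m)%N ==> (T j == p j)]].

Lemma card_agree p m : #|agree p m| = tail_prod n m.
Proof.
pose choices (j : 'I_k) : pred 'I_(n j) := if (j < m)%N then pred1 (p j) else predT.
rewrite (eq_card (B := [pred T : transv n | T \in family choices])); last first.
  move=> T; rewrite !inE; apply/forallP/familyP => agreeT j;
  by move: (agreeT j); rewrite /choices; case: ifP.
rewrite card_family foldrE big_map big_enum /= [RHS]big_mkcond /=.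
by apply: eq_bigr => j _; rewrite /choices; case: ltnP => _; rewrite ?card1 ?card_ord.
Qed.

Lemma tail_prodS (i : 'I_k) : tail_prod n i = (n i * tail_prod n i.+1)%N.
Proof.
rewrite /tail_prod (bigD1 i) //=; congr (_ * _)%N; apply: eq_bigl => j.
by rewrite -val_eqE /= ltn_neqAle eq_sym andbC.
Qed.

Lemma tail_prod_last {i : 'I_k} : i.+1 = k -> tail_prod n i = n i.
Proof.
move=> iS; rewrite tail_prodS /tail_prod big1 ?muln1 // => j.
by rewrite iS leqNgt ltn_ord.
Qed.

Lemma agree_next {p} {i : 'I_k} {T T'} :
  agree p i T -> agree p i T' -> T' i = T i -> agree T i.+1 T'.
Proof.
move=> /forallP agreeT /forallP agreeT' eq_i; apply/forallP => j; apply/implyP.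
rewrite ltnS leq_eqVlt => /orP[/eqP/val_inj -> | j_lt]; first by rewrite eq_i.
by move: (agreeT j) (agreeT' j); rewrite j_lt /= => /eqP -> /eqP ->.
Qed.

Lemma agree_full T T' : agree T k T' -> T' = T.
Proof. by move=> /forallP agreeT; apply/ffunP => j; move: (agreeT j); rewrite ltn_ord => /eqP. Qed.

End Transversals.

Section Clusters.
Context {R : realType} {d k : nat} {n : 'I_k -> nat}.
Variable F : forall i : 'I_k, 'I_(n i) -> set 'rV[R]_d.
Hypothesis F_convex : forall i j, convex_set (F i j).
Variables (b : 'rV[R]_d) (gam : R).
Hypotheses (gam_ge0 : 0 <= gam) (gam_lt1 : gam < 1).

Definition good (T : transv n) : bool := `[< KT F T `&` eball b 1 !=set0 >].

Definition witness (T : transv n) : 'rV[R]_d := xget b (KT F T `&` eball b 1).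

Definition hitting (c : 'rV[R]_d) (i : 'I_k) :=
  [pred j : 'I_(n i) | `[< F i j `&` eball c (Num.sqrt k%:R)^-1 !=set0 >]].

Definition cluster (m : nat) (p : transv n) (c : 'rV[R]_d) : pred (transv n) :=
  [pred T | [&& agree p m T, good T & sqnorm (witness T - c) <= 1 - m%:R / k%:R]].

Definition fibre (i : 'I_k) (p : transv n) c (K : 'I_(n i)) : pred (transv n) :=
  [pred T | (T \in cluster i p c) && (T i == K)].

Lemma witness_good T :
  good T -> (forall i, F i (T i) (witness T)) /\ sqnorm (witness T - b) <= 1.
Proof.
move=> /asboolP/(xgetPex b)[KT_w ball_w]; split => //.
by have := (eball_sqnorm b 1 (witness T) ler01).1 ball_w; rewrite expr1n.
Qed.

Lemma hitting_sqnorm c i j y :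
  F i j y -> sqnorm (y - c) <= k%:R^-1 -> j \in hitting c i.
Proof.
move=> Fy y_near; rewrite inE; exists y; split => //.
have r_ge0 : 0 <= (Num.sqrt k%:R)^-1 :> R by rewrite invr_ge0 sqrtr_ge0.
by apply/(eball_sqnorm c _ y r_ge0); rewrite exprVn sqr_sqrtr ?ler0n.
Qed.

Lemma card_cluster0 p : #|cluster 0 p b| = #|[pred T | good T]|.
Proof.
apply: eq_card => T; rewrite !inE mul0r subr0 andbC.
case good_T: (good T) => //=; rewrite (witness_good T good_T).2 /=.
by apply/forallP.
Qed.

Lemma card_cluster_fibres (i : 'I_k) p c :
  #|cluster i p c| = (\sum_K #|fibre i p c K|)%N.
Proof.
rewrite -sum1_card (partition_big (fun T : transv n => T i) predT) //=.
by apply: eq_bigr => K _; rewrite -sum1_card.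
Qed.

Lemma fibre_agree {i : 'I_k} {p c K T0 T} :
  T0 \in fibre i p c K -> T \in fibre i p c K -> agree T0 i.+1 T.
Proof.
rewrite !inE => /andP[/and3P[agree_T0 _ _] /eqP T0_K] /andP[/and3P[agree_T _ _] /eqP T_K].
by apply: (agree_next agree_T0 agree_T); rewrite T0_K T_K.
Qed.

Lemma card_fibre_le (i : 'I_k) p c K : (#|fibre i p c K| <= tail_prod n i.+1)%N.
Proof.
have [->//|/card_gt0P[T0 T0_K]] := posnP #|fibre i p c K|.
rewrite -(card_agree T0); apply/subset_leq_card/fintype.subsetP => T.
exact: fibre_agree.
Qed.

Lemma fibre_recentre {i : 'I_k} {p c K T0} :
  K \notin hitting c i -> T0 \in fibre i p c K ->
  exists c', {subset fibre i p c K <= cluster i.+1 T0 c'}.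
Proof.
move=> K_far T0_K.
have [c' near_c'] : exists c', {in fibre i p c K, forall T,
    sqnorm (witness T - c') <= 1 - i%:R / k%:R - k%:R^-1}.
  apply: (convex_recentre witness _ (F_convex i K)).
  - by apply/card_gt0P; exists T0.
  - move=> T; rewrite inE => /andP[/and3P[_ good_T _] /eqP <-].
    exact: (witness_good T good_T).1.
  - move=> y Fy; rewrite ltNge; apply: contra K_far; exact: hitting_sqnorm.
  - by move=> T; rewrite !inE => /andP[/and3P[]].
exists c' => T T_K; rewrite inE; apply/and3P; split.
- exact: fibre_agree T0_K T_K.
- by case/andP: T_K => /and3P[].
- by have := near_c' T T_K; rewrite -natr1 mulrDl mul1r opprD addrA.
Qed.

Section Sparse.
Hypothesis hitting_small : forall c i, #|hitting c i|%:R < (1 - gam) * (n i)%:R.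
Hypothesis n_gt0 : forall i, (0 < n i)%N.

Lemma cluster_step (i : 'I_k) p c : (i.+1 < k)%N ->
  (1 - gam ^+ (k - i)) * (tail_prod n i)%:R <= #|cluster i p c|%:R ->
  exists p' c',
    (1 - gam ^+ (k - i.+1)) * (tail_prod n i.+1)%:R <= #|cluster i.+1 p' c'|%:R.
Proof.
move=> iSk large; set g := gam ^+ (k - i.+1); set P := tail_prod n i.+1.
have g_lt1 : g < 1 by rewrite exprn_ilt1 // subn_eq0 -ltnNge.
have [K K_far heavy] :
    exists2 K, K \notin hitting c i & (1 - g) * P%:R <= #|fibre i p c K|%:R.
  apply: (heavy_fibre (f := fun K => #|fibre i p c K|%:R) gam_ge0 (exprn_ge0 _ gam_ge0));
    rewrite ?card_ord.
  - exact: ler0n.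
  - by move=> K; rewrite ler_nat card_fibre_le.
  - exact: hitting_small.
  - move: large; rewrite (_ : k - i = (k - i.+1).+1)%N ?exprS; last by lia.
    by rewrite tail_prodS natrM card_cluster_fibres natr_sum.
have /card_gt0P[T0 T0_K] : (0 < #|fibre i p c K|)%N.
  rewrite -(ltr_nat R); apply: lt_le_trans heavy.
  by rewrite mulr_gt0 ?subr_gt0 // ltr0n prodn_gt0.
have [c' sub_cluster] := fibre_recentre K_far T0_K.
exists T0, c'; rewrite (le_trans heavy) // ler_nat.
exact/subset_leq_card/fintype.subsetP.
Qed.

Hypothesis many_good : (1 - gam ^+ k) * (\prod_(i < k) n i)%:R <= #|[pred T | good T]|%:R.

Lemma cluster_exists m : (m < k)%N ->
  exists p c, (1 - gam ^+ (k - m)) * (tail_prod n m)%:R <= #|cluster m p c|%:R.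
Proof.
elim: m => [k_gt0|m IH mSk].
  by exists [ffun i => Ordinal (n_gt0 i)], b; rewrite subn0 card_cluster0.
have [p [c large]] := IH (ltnW mSk).
exact: (cluster_step (Ordinal (ltnW mSk)) p c mSk large).
Qed.

End Sparse.

Lemma cluster_last (i : 'I_k) p c : i.+1 = k -> (#|cluster i p c| <= #|hitting c i|)%N.
Proof.
move=> iSk; rewrite -(card_in_imset (f := fun T : transv n => T i)); last first.
  move=> T1 T2 /and3P[agree_T1 _ _] /and3P[agree_T2 _ _] eq_i.
  by have := agree_next agree_T1 agree_T2 (esym eq_i); rewrite iSk => /agree_full.
apply/subset_leq_card/fintype.subsetP => _ /imsetP[T /and3P[_ good_T near_c] ->].
apply: hitting_sqnorm ((witness_good T good_T).1 i) _.
have k_neq0 : k%:R != 0 :> R by rewrite pnatr_eq0 -iSk.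
have iE : i%:R = k%:R - 1 :> R by rewrite -[in RHS]iSk -natr1 addrK.
by move: near_c; rewrite iE mulrBl divff // mul1r opprB [1 + _]addrC subrK.
Qed.

Lemma hitting_large : (0 < k)%N -> (forall i, 0 < n i)%N ->
  (1 - gam ^+ k) * (\prod_(i < k) n i)%:R <= #|[pred T | good T]|%:R ->
  exists c i, (1 - gam) * (n i)%:R <= #|hitting c i|%:R.
Proof.
move=> k_gt0 n_gt0 many_good.
have [//|no_hit] := pselect (exists c i, (1 - gam) * (n i)%:R <= #|hitting c i|%:R).
have hitting_small c i : #|hitting c i|%:R < (1 - gam) * (n i)%:R.
  by rewrite ltNge; apply/negP => hit; apply: no_hit; exists c, i.
have k1_lt : (k.-1 < k)%N by rewrite ltn_predL.
have iSk : (Ordinal k1_lt).+1 = k := prednK k_gt0.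
have [p [c]] := cluster_exists hitting_small n_gt0 many_good _ k1_lt.
rewrite (_ : k - k.-1 = 1)%N ?expr1; last by lia.
rewrite (tail_prod_last iSk) => large.
have := cluster_last _ p c iSk; rewrite -(ler_nat R) => /(le_trans large).
by rewrite leNgt hitting_small.
Qed.

End Clusters.

Lemma powR_lt1 (R : realType) (x e : R) : 0 <= x -> x < 1 -> 0 < e -> x `^ e < 1.
Proof.
move=> x_ge0 x_lt1 e_gt0; have [->|x_neq0] := eqVneq x 0; first by rewrite powR0 ?gt_eqF.
have := gt0_ltr_powR e_gt0 (x := x) (y := 1); rewrite !nnegrE powR1; apply => //.
Qed.

Lemma powR_invnK (R : realType) (x : R) k : 0 <= x -> (0 < k)%N -> (x `^ k%:R^-1) ^+ k = x.
Proof.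
move=> x_ge0 k_gt0; rewrite -powR_mulrn ?powR_ge0 // -powRrM.
by rewrite mulVf ?pnatr_eq0 -?lt0n // powRr1.
Qed.

Theorem theorem4p3 (R : realType) (d k : nat) (n : 'I_k -> nat)
  (F : forall i : 'I_k, 'I_(n i) -> set 'rV[R]_d)
  (b : 'rV[R]_d) (alpha : R) :
  (0 < k)%N ->
  (forall i, (0 < n i)%N) ->
  (forall i, injective (F i)) ->
  (forall i j, convex_set (F i j)) ->
  0 < alpha -> alpha <= 1 ->
  alpha * (\prod_(i < k) n i)%:R <=
    #|[pred t : transv n | `[< KT F t `&` eball b 1 !=set0 >]]|%:R ->
  exists (q : 'rV[R]_d) (i : 'I_k),
    (1 - (1 - alpha) `^ (k%:R^-1)) * (n i)%:R <=
      #|[pred j : 'I_(n i) | `[< F i j `&` eball q (Num.sqrt k%:R)^-1 !=set0 >]]|%:R.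
Proof.
move=> k_gt0 n_gt0 _ F_convex alpha_gt0 alpha_le1 many_good.
have gam_ge0 : 0 <= (1 - alpha) `^ k%:R^-1 by exact: powR_ge0.
have gam_lt1 : (1 - alpha) `^ k%:R^-1 < 1.
  by apply: powR_lt1; rewrite ?invr_gt0 ?ltr0n //; lra.
apply: (hitting_large F F_convex b _ gam_ge0 gam_lt1 k_gt0 n_gt0).
by rewrite powR_invnK ?subr_ge0 // subKr.
Qed.
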